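(* Every cograph has an hc-coloring.
   Context: All graphs are finite, simple and undirected. A (proper vertex) coloring of $G=(V,E)$ is a surjective map $\sigma:V\to S$ with $\sigma(x)\neq\sigma(y)$ whenever $xy\in E$. A cograph is a graph that is $K_1$, or a disjoint union of cographs, or a join of cographs. A cotree $(T,t)$ of a cograph $G$ is a rooted tree $T$ with leaf set $V$ and a labeling $t:V^0(T)\to\{0,1\}$ of its inner vertices such that for every inner vertex $u$, $G(u):=G[L(T(u))]$ (with $L(T(u))$ the leaves descending from $u$) is the disjoint union (if $t(u)=0$) or the join (if $t(u)=1$) of the graphs $G(v)$, $v$ a child of $u$. It is binary if every inner vertex has exactly two children. A coloring $\sigma$ is an hc-coloring with respect to a binary cotree $(T,t)$ if for every inner vertex $u$ with children $v_1,v_2$: if $t(u)=1$ then $\sigma(L(T(v_1)))\cap\sigma(L(T(v_2)))=\emptyset$, and if $t(u)=0$ then one of $\sigma(L(T(v_1)))$, $\sigma(L(T(v_2)))$ contains the other. A coloring of a cograph $G$ is an hc-coloring of $G$ if it is an hc-coloring with respect to some binary cotree of $G$. *)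

(* A simple graph is a symmetric irreflexive relation e on a finType V. *)
From mathcomp Require Import all_boot.
Set Implicit Arguments. Unset Strict Implicit. Unset Printing Implicit Defensive.

Section Cographs.
Variable V : finType.
Variable e : rel V.

Inductive cograph_set : {set V} -> Prop :=
| cograph_K1 (x : V) : cograph_set [set x]
| cograph_union (B C : {set V}) :
    [disjoint B & C] -> cograph_set B -> cograph_set C ->
    (forall x y, x \in B -> y \in C -> ~~ e x y) ->
    cograph_set (B :|: C)
| cograph_join (B C : {set V}) :
    [disjoint B & C] -> cograph_set B -> cograph_set C ->
    (forall x y, x \in B -> y \in C -> e x y) ->
    cograph_set (B :|: C).

Definition is_cograph : Prop := cograph_set [set: V].

(* Binary rooted trees with leaves labelled by vertices and inner vertices
   labelled by a bool (false = 0 = disjoint union, true = 1 = join). *)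
Inductive btree : Type :=
| Leaf of V
| Node of bool & btree & btree.

Fixpoint leaves (t : btree) : seq V :=
  match t with
  | Leaf v => [:: v]
  | Node _ l r => leaves l ++ leaves r
  end.

Fixpoint cotree_ok (t : btree) : Prop :=
  match t with
  | Leaf _ => True
  | Node b l r =>
      (forall x y, x \in leaves l -> y \in leaves r -> e x y = b)
      /\ cotree_ok l /\ cotree_ok r
  end.

Definition binary_cotree (t : btree) : Prop :=
  uniq (leaves t) /\ (forall v : V, v \in leaves t) /\ cotree_ok t.

Definition coloring (S : eqType) (sigma : V -> S) : Prop :=
  (forall s : S, exists x, sigma x = s) /\
  (forall x y, e x y -> sigma x != sigma y).

Fixpoint hc_wrt (S : eqType) (sigma : V -> S) (t : btree) : Prop :=
  match t with
  | Leaf _ => True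
  | Node b l r =>
      (if b then
         (forall x y, x \in leaves l -> y \in leaves r -> sigma x != sigma y)
       else
         {subset map sigma (leaves l) <= map sigma (leaves r)} \/
         {subset map sigma (leaves r) <= map sigma (leaves l)})
      /\ hc_wrt sigma l /\ hc_wrt sigma r
  end.

Definition hc_coloring (S : eqType) (sigma : V -> S) : Prop :=
  coloring sigma /\ exists t, binary_cotree t /\ hc_wrt sigma t.

End Cographs.

(* A binary cotree of the cograph is built by induction on its cograph
   structure. Colour it bottom-up: a leaf gets colour 0; at a join node the
   colours of the right subtree are shifted past those of the left one, so the
   two colour sets are disjoint, while at a union node both subtrees keep their
   colours. Each subtree then uses exactly an initial segment [0, n) of the
   naturals, so at a union node the smaller segment is contained in the larger
   one. Properness is automatic for any hc-colouring: the lowest common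
   ancestor of two adjacent leaves is a join node. *)

From mathcomp Require Import all_boot.
Set Implicit Arguments. Unset Strict Implicit. Unset Printing Implicit Defensive.

Section HcColoring.
Variable V : finType.
Variable e : rel V.

Lemma hc_wrt_proper (S : eqType) (sigma : V -> S) t :
  symmetric e -> irreflexive e -> cotree_ok e t -> hc_wrt sigma t ->
  {in leaves t &, forall x y, e x y -> sigma x != sigma y}.
Proof.
move=> sym irr; elim: t => [v|b l IHl r IHr] /=.
  by move=> _ _ x y; rewrite !inE => /eqP -> /eqP ->; rewrite irr.
move=> [ok [okl okr]] [hc [hcl hcr]].
have cross x y : x \in leaves l -> y \in leaves r -> e x y -> sigma x != sigma y.
  by move=> xl yr exy; case: b ok hc => ok hc; [apply: hc | rewrite ok in exy].
move=> x y; rewrite !mem_cat.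
case/orP=> [xl|xr]; case/orP=> [yl|yr] exy.
- exact: IHl.
- exact: cross.
- by rewrite eq_sym; apply: cross; rewrite // sym.
- exact: IHr.
Qed.

Lemma sub_map_inj (T1 T2 : eqType) (f : T1 -> T2) (s1 s2 : seq T1) :
  injective f -> {subset map f s1 <= map f s2} <-> {subset s1 <= s2}.
Proof.
move=> finj; split=> sub x; last by move=> /mapP [y /sub y2 ->]; apply: map_f.
by rewrite -!(mem_map finj); apply: sub.
Qed.

Lemma hc_wrt_inj (S1 S2 : eqType) (f : S1 -> S2) (s1 : V -> S1) (s2 : V -> S2) t :
  injective f -> {in leaves t, forall x, s2 x = f (s1 x)} ->
  hc_wrt s2 t <-> hc_wrt s1 t.
Proof.
move=> finj; elim: t => [v|b l IHl r IHr] //= hs.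
have hsl : {in leaves l, forall x, s2 x = f (s1 x)}.
  by move=> x xl; apply: hs; rewrite mem_cat xl.
have hsr : {in leaves r, forall x, s2 x = f (s1 x)}.
  by move=> x xr; apply: hs; rewrite mem_cat xr orbT.
have map_s2 u : {in leaves u, forall x, s2 x = f (s1 x)} ->
    map s2 (leaves u) = map f (map s1 (leaves u)).
  by move=> hu; rewrite -map_comp; apply/eq_in_map.
have local : (if b then forall x y, x \in leaves l -> y \in leaves r -> s2 x != s2 y
              else {subset map s2 (leaves l) <= map s2 (leaves r)} \/
                   {subset map s2 (leaves r) <= map s2 (leaves l)}) <->
             (if b then forall x y, x \in leaves l -> y \in leaves r -> s1 x != s1 y
              else {subset map s1 (leaves l) <= map s1 (leaves r)} \/
                   {subset map s1 (leaves r) <= map s1 (leaves l)}).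
  case: b; last first.
    rewrite !map_s2 //; have sm := sub_map_inj _ _ finj.
    by split=> -[/sm h | /sm h]; [left | right | left | right]; try exact/sm.
  by split=> h x y xl yr; move: (h x y xl yr); rewrite hsl // hsr // (inj_eq finj).
by split=> -[/local h [/(IHl hsl) hl /(IHr hsr) hr]].
Qed.

Fixpoint tree_ncol (t : btree V) : nat :=
  match t with
  | Leaf _ => 1
  | Node b l r =>
      if b then tree_ncol l + tree_ncol r else maxn (tree_ncol l) (tree_ncol r)
  end.

Fixpoint tree_col (t : btree V) : V -> nat :=
  match t with
  | Leaf _ => fun _ => 0
  | Node b l r => fun x =>
      if x \in leaves l then tree_col l x
      else (if b then tree_ncol l else 0) + tree_col r x
  end.

Lemma tree_col_lt t x : tree_col t x < tree_ncol t.
Proof.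
elim: t x => [v|[] l IHl r IHr] x //=; case: ifP => _.
- exact: leq_trans (IHl x) (leq_addr _ _).
- by rewrite ltn_add2l.
- exact: leq_trans (IHl x) (leq_maxl _ _).
- exact: leq_trans (IHr x) (leq_maxr _ _).
Qed.

Lemma uniq_leaves_Node b (l r : btree V) :
  uniq (leaves (Node b l r)) -> uniq (leaves l) /\ uniq (leaves r).
Proof. by rewrite /= cat_uniq => /and3P [-> _ ->]. Qed.

Lemma tree_col_NodeR b l r x :
  uniq (leaves (Node b l r)) -> x \in leaves r ->
  tree_col (Node b l r) x = (if b then tree_ncol l else 0) + tree_col r x.
Proof. by rewrite cat_uniq => /and3P [_ /hasPn dis _] /dis /negbTE /= ->. Qed.

Lemma tree_col_surj t c :
  uniq (leaves t) -> c < tree_ncol t -> exists2 x, x \in leaves t & tree_col t x = c.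
Proof.
elim: t c => [v|b l IHl r IHr] c ut.
  by rewrite ltnS leqn0 => /eqP ->; exists v; rewrite ?inE.
have [ul ur] := uniq_leaves_Node ut.
case: (ltnP c (tree_ncol l)) => [cl _ | lc cn].
  by have [x xl <-] := IHl c ul cl; exists x; rewrite /= ?mem_cat xl.
have ckr : c - (if b then tree_ncol l else 0) < tree_ncol r.
  by case: (b) cn => cn; [rewrite ltn_subLR // addnC | rewrite subn0;
    move: cn; rewrite leq_max ltnNge lc].
have [x xr hx] := IHr _ ur ckr.
exists x; first by rewrite mem_cat xr orbT.
by rewrite (tree_col_NodeR ut xr) hx subnKC //; case: (b).
Qed.

Lemma tree_col_image_sub t1 t2 :
  uniq (leaves t2) -> tree_ncol t1 <= tree_ncol t2 ->
  {subset map (tree_col t1) (leaves t1) <= map (tree_col t2) (leaves t2)}.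
Proof.
move=> u2 le12 _ /mapP [w _ ->].
have [y yt <-] := tree_col_surj u2 (leq_trans (tree_col_lt t1 w) le12).
exact: map_f.
Qed.

Lemma hc_wrt_tcol t : uniq (leaves t) -> hc_wrt (tree_col t) t.
Proof.
elim: t => [v|b l IHl r IHr] // ut.
have [ul ur] := uniq_leaves_Node ut.
have hsl : {in leaves l, forall x, tree_col (Node b l r) x = tree_col l x}.
  by move=> x /= ->.
have hsr := tree_col_NodeR ut.
split; last split.
- case: b ut hsl hsr => ut hsl hsr.
    move=> x y xl yr; rewrite hsl // hsr // ltn_eqF //.
    exact: leq_trans (tree_col_lt _ _) (leq_addr _ _).
  have -> : map (tree_col (Node false l r)) (leaves l) = map (tree_col l) (leaves l).
    exact/eq_in_map.
  have -> : map (tree_col (Node false l r)) (leaves r) = map (tree_col r) (leaves r).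
    exact/eq_in_map.
  by case: (leqP (tree_ncol l) (tree_ncol r)) => lr; [left | right; move/ltnW: lr];
    apply: tree_col_image_sub.
- exact: (hc_wrt_inj (@inj_id nat) hsl).2 (IHl ul).
- exact: (hc_wrt_inj (@addnI _) hsr).2 (IHr ur).
Qed.

Definition cotree_of (A : {set V}) (t : btree V) : Prop :=
  [/\ uniq (leaves t), leaves t =i A & cotree_ok e t].

Lemma cotree_of_Node b (B C : {set V}) tB tC :
  [disjoint B & C] -> cotree_of B tB -> cotree_of C tC ->
  (forall x y, x \in B -> y \in C -> e x y = b) ->
  cotree_of (B :|: C) (Node b tB tC).
Proof.
move=> dis [uB mB oB] [uC mC oC] cross; split=> /=.
- rewrite cat_uniq uB uC andbT /=; apply/hasPn => y; rewrite mC mB => yC.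
  by rewrite (disjointFl dis yC).
- by move=> v; rewrite mem_cat inE mB mC.
- by split=> // x y; rewrite mB mC; apply: cross.
Qed.

Lemma cotree_of_cograph A : cograph_set e A -> exists t, cotree_of A t.
Proof.
elim=> [x | B C dis _ [tB hB] _ [tC hC] cross | B C dis _ [tB hB] _ [tC hC] cross].
- by exists (Leaf x); split=> // v; rewrite !inE.
- by exists (Node false tB tC); apply: cotree_of_Node => // x y xB yC;
    apply/negbTE/cross.
- by exists (Node true tB tC); apply: cotree_of_Node.
Qed.

End HcColoring.

Theorem corollary6 (V : finType) (e : rel V) :
  symmetric e -> irreflexive e -> is_cograph e ->
  exists (S : eqType) (sigma : V -> S), hc_coloring e sigma.
Proof.
move=> sym irr /cotree_of_cograph [t [ut mt ot]].
have allt v : v \in leaves t by rewrite mt inE.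
pose sigma x : 'I_(tree_ncol t) := Ordinal (tree_col_lt t x).
have hc : hc_wrt sigma t.
  by apply/(hc_wrt_inj (s2 := tree_col t) val_inj)/hc_wrt_tcol.
exists 'I_(tree_ncol t), sigma; split; last by exists t.
split=> [c | x y].
- by have [x _ hx] := tree_col_surj ut (ltn_ord c); exists x; apply: val_inj.
- exact: hc_wrt_proper sym irr ot hc x y (allt x) (allt y).
Qed.
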